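(* Let $X$ be a finite set with $|X|\ge 3$, let $T\in B(X)$, and let $\mathcal T$ be a minimal triplet cover of $T$. Then $|\mathcal T|\le 3(|X|-2)$.
   Context: A binary phylogenetic $X$-tree is an unrooted tree whose leaf set is $X$ and all of whose non-leaf vertices are unlabelled of degree three; $B(X)$ is the set of such trees. Pairs in $\binom{X}{2}$ are written $ab$, triples $abc$. Given $\mathcal T\subseteq\binom{X}{2}$, a triple $abc$ supports an interior vertex $v$ if $a,b,c$ lie one in each of the three components of $T$ minus $v$ and $ab,ac,bc\in\mathcal T$; $\mathcal T$ is a triplet cover for $T$ if every interior vertex is supported by some triple. A triplet cover $\mathcal T$ is minimal if $\mathcal T-\{ab\}$ is not a triplet cover for $T$ for any $ab\in\mathcal T$. *)

From mathcomp Require Import all_boot.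
Set Implicit Arguments. Unset Strict Implicit. Unset Printing Implicit Defensive.

Definition simple_graph (V : finType) (e : rel V) : Prop :=
  (forall u v, e u v = e v u) /\ (forall v, ~~ e v v).

Definition deg (V : finType) (e : rel V) (v : V) : nat := #|[set w | e v w]|.

Definition is_tree (V : finType) (e : rel V) : Prop :=
  [/\ simple_graph e,
      (forall u v, connect e u v) &
      (forall c : seq V, uniq c -> 3 <= size c -> ~~ cycle e c)].

(* Binary phylogenetic X-tree: tree (V,e) with leaf labelling phi : X -> V,
   injective, labelled vertices are exactly the leaves (degree <= 1), and all
   unlabelled (interior) vertices have degree three. *)
Definition binary_phylo_tree (X V : finType) (e : rel V) (phi : X -> V) : Prop :=
  [/\ is_tree e, injective phi,
      (forall x, deg e (phi x) <= 1) &
      (forall v, v \notin codom phi -> deg e v = 3)].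

Definition interior (X V : finType) (phi : X -> V) (v : V) : bool :=
  v \notin codom phi.

Definition del_rel (V : finType) (e : rel V) (v : V) : rel V :=
  [rel x y | [&& e x y, x != v & y != v]].

Definition separated (X V : finType) (e : rel V) (phi : X -> V) (v : V) (a b : X)
  : bool := ~~ connect (del_rel e v) (phi a) (phi b).

Definition pair2 (X : finType) (a b : X) : {set X} := [set a; b].

Definition supports (X V : finType) (e : rel V) (phi : X -> V)
  (Tc : {set {set X}}) (a b c : X) (v : V) : bool :=
  [&& separated e phi v a b, separated e phi v a c, separated e phi v b c,
      pair2 a b \in Tc, pair2 a c \in Tc & pair2 b c \in Tc].

Definition triplet_cover (X V : finType) (e : rel V) (phi : X -> V)
  (Tc : {set {set X}}) : Prop :=
  (forall p, p \in Tc -> #|p| = 2) /\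
  (forall v, interior phi v -> exists a b c, supports e phi Tc a b c v).

Definition minimal_triplet_cover (X V : finType) (e : rel V) (phi : X -> V)
  (Tc : {set {set X}}) : Prop :=
  triplet_cover e phi Tc /\
  (forall p, p \in Tc -> ~ triplet_cover e phi (Tc :\ p)).

From mathcomp Require Import all_boot zify.
Set Implicit Arguments. Unset Strict Implicit. Unset Printing Implicit Defensive.

(* By minimality, every pair p of the cover is critical for some interior vertex v:
   removing p leaves v unsupported.  If abc is a fixed triple supporting v, every pair
   critical for v is one of ab, ac, bc, so the cover has at most three pairs per interior
   vertex.  A binary tree with n leaves has n - 2 interior vertices: its degrees sum to
   at most 2(|V| - 1), since a forest always has a vertex of degree at most one, while
   the leaves contribute at least n and each interior vertex exactly 3. *)

Section Forest.
Variables (V : finType) (e : rel V).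
Hypothesis e_sym : symmetric e.
Hypothesis e_irr : forall v, ~~ e v v.
Hypothesis e_acyclic : forall c : seq V, uniq c -> 3 <= size c -> ~~ cycle e c.

Definition nbhd (S : {set V}) (u : V) : {set V} := [set w in S | e u w].

Lemma acyclic_path_no_chord x r y p :
  path e x (r :: p) -> uniq [:: x, r & p] -> y \in p -> ~~ e x y.
Proof.
move=> + + y_p; case/path.splitP: y_p => p1 p2.
rewrite -cat_cons cat_path -!cat_cons cat_uniq => /andP[xr_path _] /andP[uniq_cyc _].
apply: contraL (e_acyclic uniq_cyc _) => [exy|]; last by rewrite /= size_rcons.
by rewrite /cycle rcons_path xr_path /= last_rcons e_sym exy.
Qed.

Lemma path_extends (S : {set V}) x p :
  1 < #|nbhd S x| -> path e x p -> uniq (x :: p) ->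
  exists2 y, y \in S & e y x && (y \notin x :: p).
Proof.
move=> deg_x path_xp uniq_xp.
have /set0Pn[y] : nbhd S x :\ head x p != set0.
  have := cardsD1 (head x p) (nbhd S x); have := leq_b1 (head x p \in nbhd S x).
  rewrite -card_gt0; lia.
rewrite !inE => /and3P[y_head yS exy]; exists y; rewrite // -e_sym exy /=.
have y_x : y != x by apply: contraTneq exy => ->.
rewrite inE negb_or y_x /=.
case: p y_head path_xp uniq_xp => [|r p] // y_r path_xrp uniq_xrp.
move: y_r => /= y_r; rewrite inE negb_or y_r /=.
by apply/negP => /(acyclic_path_no_chord path_xrp uniq_xrp); rewrite exy.
Qed.

Lemma forest_has_leaf (S : {set V}) :
  S != set0 -> exists2 x, x \in S & #|nbhd S x| <= 1.
Proof.
move=> /set0Pn[x0 x0S].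
case: (pickP [pred x in S | #|nbhd S x| <= 1]) => [x /andP[]|no_leaf]; first by exists x.
have deg_S x : x \in S -> 1 < #|nbhd S x|.
  by move=> xS; rewrite ltnNge; have /negbT := no_leaf x; rewrite /= xS.
have long_path n : exists x p, [/\ size p = n, path e x p, uniq (x :: p) & x \in S].
  elim: n => [|n [x [p [size_p path_xp uniq_xp xS]]]]; first by exists x0, [::].
  have [y yS /andP[eyx y_xp]] := path_extends (deg_S x xS) path_xp uniq_xp.
  exists y, (x :: p); split=> //.
  - by rewrite /= size_p.
  - by rewrite /= eyx.
  - by rewrite cons_uniq y_xp.
have [x [p [size_p _ /card_uniqP card_xp _]]] := long_path #|V|.
by have := max_card (mem (x :: p)); rewrite card_xp /= size_p ltnn.
Qed.

Lemma sum_card_nbhdD1 (S : {set V}) x : x \in S ->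
  \sum_(u in S) #|nbhd S u|
    = \sum_(u in S :\ x) #|nbhd (S :\ x) u| + 2 * #|nbhd S x|.
Proof.
move=> xS; rewrite (big_setD1 x xS) /=.
have nbhdD1 u : u \in S :\ x -> #|nbhd S u| = e u x + #|nbhd (S :\ x) u|.
  move=> _; rewrite (cardsD1 x) [x \in _]inE xS /=.
  by congr (_ + _); apply: eq_card => w; rewrite !inE andbA.
have sum_adj_x : \sum_(u in S :\ x) (e u x : nat) = #|nbhd S x|.
  rewrite (eq_bigr (fun u => if e x u then 1 else 0)) => [|u _]; last first.
    by rewrite e_sym; case: (e x u).
  rewrite -big_mkcondr sum1dep_card; apply: eq_card => u; rewrite !inE.
  by case: eqVneq => [->|] //=; rewrite (negbTE (e_irr x)) andbF.
rewrite (eq_bigr _ nbhdD1) big_split /= sum_adj_x; lia.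
Qed.

Lemma sum_card_nbhd_le (S : {set V}) :
  \sum_(u in S) #|nbhd S u| <= 2 * (#|S| - 1).
Proof.
have [n] := ubnP #|S|; elim: n S => // n IH S card_S.
have [->|/forest_has_leaf[x xS leaf_x]] := eqVneq S set0; first by rewrite big_set0.
have card_SD1 : #|S| = #|S :\ x|.+1 by rewrite (cardsD1 x) xS.
have := IH (S :\ x); rewrite -card_SD1 => /(_ card_S) IH_Sx.
have nbhd_x_sub : nbhd S x \subset S :\ x.
  apply/subsetP => w; rewrite !inE => /andP[wS exw].
  by rewrite wS andbT; apply: contraTneq exw => ->.
have := subset_leq_card nbhd_x_sub; rewrite (sum_card_nbhdD1 xS); lia.
Qed.

End Forest.

Lemma connected_deg_gt0 (V : finType) (e : rel V) v :
  (forall u w, connect e u w) -> 1 < #|V| -> 0 < deg e v.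
Proof.
move=> conn V_gt1; have /set0Pn[w] : [set~ v] != set0.
  by rewrite -card_gt0 cardsC1 -ltnS prednK // ltnW.
rewrite !inE => w_v; have /connectP[[|y p] /= path_vp w_last] := conn v w.
  by rewrite w_last eqxx in w_v.
by rewrite card_gt0; apply/set0Pn; exists y; rewrite inE; case/andP: path_vp.
Qed.

Lemma tree_sum_deg_le (V : finType) (e : rel V) :
  is_tree e -> \sum_v deg e v <= 2 * (#|V| - 1).
Proof.
move=> [[e_sym e_irr] _ e_acyclic].
have := sum_card_nbhd_le e_sym e_irr e_acyclic [set: V]; rewrite cardsT.
apply: leq_trans; apply/eq_leq/eq_big => [v|v _]; first by rewrite inE.
by apply: eq_card => w; rewrite !inE.
Qed.

Lemma card_interior_add2 (X V : finType) (e : rel V) (phi : X -> V) :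
  1 < #|X| -> binary_phylo_tree e phi -> #|[set v | interior phi v]| + 2 <= #|X|.
Proof.
move=> X_gt1 [tree phi_inj _ deg_interior]; have [_ conn _] := tree.
set I := [set v | interior phi v].
have card_leaves : #|codom phi| = #|X| := card_codom phi_inj.
have card_V : #|V| = #|X| + #|I|.
  rewrite -card_leaves -(cardC (mem (codom phi))).
  by congr (_ + _); apply: eq_card => v; rewrite !inE.
have sum_deg_leaves : #|X| <= \sum_(v | v \in codom phi) deg e v.
  rewrite -card_leaves -cardsE -sum1dep_card; apply: leq_sum => v _.
  by apply: connected_deg_gt0; rewrite // card_V; apply: ltn_addr.
have sum_deg_interior : \sum_(v | v \notin codom phi) deg e v = #|I| * 3.
  by rewrite -sum_nat_cond_const; apply: eq_bigr => v; apply: deg_interior.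
have : #|X| + #|I| * 3 <= 2 * (#|X| + #|I| - 1).
  rewrite -card_V -sum_deg_interior; apply: leq_trans (tree_sum_deg_le tree).
  by rewrite [leqRHS](bigID (fun v => v \in codom phi)) leq_add2r.
lia.
Qed.

Lemma leq_card_bigcup (I T : finType) (P : pred I) (F : I -> {set T}) :
  #|\bigcup_(i | P i) F i| <= \sum_(i | P i) #|F i|.
Proof.
elim/big_ind2: _ => [|m A n B le_Am le_Bn|//]; first by rewrite cards0.
by apply: leq_trans (leq_card_setU A B).1 _; apply: leq_add.
Qed.

Section TripletCover.
Variables (X V : finType) (e : rel V) (phi : X -> V).

Definition supported (Tc : {set {set X}}) (v : V) : bool :=
  [exists a, exists b, exists c, supports e phi Tc a b c v].

Definition critical_pairs (Tc : {set {set X}}) (v : V) : {set {set X}} :=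
  [set p in Tc | ~~ supported (Tc :\ p) v].

Lemma supports_setD1 Tc a b c v p :
  supports e phi Tc a b c v -> p \notin [:: pair2 a b; pair2 a c; pair2 b c] ->
  supports e phi (Tc :\ p) a b c v.
Proof.
move=> /and3P[s_ab s_ac /and4P[s_bc T_ab T_ac T_bc]].
rewrite /supports s_ab s_ac s_bc !inE T_ab T_ac T_bc !andbT !negb_or.
by rewrite ![p == _]eq_sym.
Qed.

Lemma critical_pairs_sub Tc a b c v : supports e phi Tc a b c v ->
  critical_pairs Tc v \subset [:: pair2 a b; pair2 a c; pair2 b c].
Proof.
move=> abc_v; apply/subsetP => p; rewrite inE => /andP[_].
apply: contraNT => p_abc; apply/existsP; exists a; apply/existsP; exists b.
by apply/existsP; exists c; apply: supports_setD1.
Qed.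

Lemma card_critical_pairs Tc v : triplet_cover e phi Tc -> interior phi v ->
  #|critical_pairs Tc v| <= 3.
Proof.
move=> [_ cover] /cover[a [b [c abc_v]]].
exact: leq_trans (subset_leq_card (critical_pairs_sub abc_v)) (card_size _).
Qed.

Lemma minimal_cover_critical Tc : minimal_triplet_cover e phi Tc ->
  Tc \subset \bigcup_(v | interior phi v) critical_pairs Tc v.
Proof.
move=> [[pairs _] minimal]; apply/subsetP => p pT.
case: (pickP [pred v | interior phi v && ~~ supported (Tc :\ p) v]) => [v|all_supported].
  by case/andP=> iv nv; apply/bigcupP; exists v; rewrite // inE pT.
case: (minimal p pT); split=> [q /setD1P[_ /pairs] // | v iv].
have := all_supported v; rewrite /= iv.
by move=> /negbFE/existsP[a /existsP[b /existsP[c abc_v]]]; exists a, b, c.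
Qed.

End TripletCover.

Theorem corollary1 (X V : finType) (e : rel V) (phi : X -> V)
  (Tc : {set {set X}}) :
  3 <= #|X| ->
  binary_phylo_tree e phi ->
  minimal_triplet_cover e phi Tc ->
  #|Tc| <= 3 * (#|X| - 2).
Proof.
move=> X_ge3 tree minimal.
have card_cover := subset_leq_card (minimal_cover_critical minimal).
have sum_critical : \sum_(v | interior phi v) #|critical_pairs e phi Tc v|
                    <= #|[set v | interior phi v]| * 3.
  rewrite -sum_nat_cond_const; apply: leq_sum => v.
  exact: card_critical_pairs minimal.1.
have := card_interior_add2 (ltnW X_ge3) tree.
have := leq_trans card_cover (leq_card_bigcup _ _); lia.
Qed.
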